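(* Let $A=(a_0,\dots,a_r)$ be a complex $(c+1)\times(r+1)$ matrix of full rank with pairwise linearly independent columns. Then there exists a unique (up to order of summands) decomposition $\mathbb{C}^{c+1}=V_1\oplus\dots\oplus V_t$ into nonzero linear subspaces such that: (i) for each $0\le i\le r$ there is $j(i)\in\{1,\dots,t\}$ with $a_i\in V_{j(i)}$; (ii) whenever $\mathbb{C}^{c+1}=V'_1\oplus\dots\oplus V'_s$ is any decomposition into linear subspaces satisfying (i), then for every $1\le i\le t$ there is $1\le j\le s$ with $V_i\subseteq V'_j$. *)

From mathcomp Require Import all_boot all_algebra complex.
From mathcomp Require Import Rstruct.
Set Implicit Arguments. Unset Strict Implicit. Unset Printing Implicit Defensive.
Import GRing.Theory.
Local Open Scope ring_scope.

Definition Cplx : numClosedFieldType := (Rdefinitions.R)[i].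

Notation Cvec c := 'cV[Cplx]_(c.+1).

Definition is_direct_decomp (c t : nat) (V : 'I_t -> {vspace Cvec c}) : Prop :=
  directv (\sum_(i < t) V i)%VS /\ (\sum_(i < t) V i)%VS = fullv.

Definition cols_adapted (c r t : nat) (A : 'M[Cplx]_(c.+1, r.+1))
    (V : 'I_t -> {vspace Cvec c}) : Prop :=
  forall i : 'I_r.+1, exists j : 'I_t, col i A \in V j.

Definition finest_adapted_decomp (c r t : nat) (A : 'M[Cplx]_(c.+1, r.+1))
    (V : 'I_t -> {vspace Cvec c}) : Prop :=
  [/\ is_direct_decomp V,
      (forall j, V j != 0%VS),
      cols_adapted A V &
      (forall (s : nat) (W : 'I_s -> {vspace Cvec c}),
          is_direct_decomp W -> cols_adapted A W ->
          forall i : 'I_t, exists j : 'I_s, (V i <= W j)%VS)].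

(* Call a decomposition adapted to A column-spanned when each summand is
   spanned by the columns it contains; the trivial decomposition is one because
   A has full rank.  If a summand V_i of a column-spanned decomposition lies in
   no summand of some adapted decomposition W, pick a nonzero column of V_i and
   the summand W_j containing it: the columns of V_i inside and outside W_j span
   two nonzero subspaces, independent because W is direct, and replacing V_i by
   them gives a column-spanned decomposition with one more summand.  A direct
   sum has at most c+1 nonzero summands, so this refinement stops at a finest
   decomposition.  Two finest decompositions refine each other, and a nonzero
   summand of a direct sum lies in no other summand, so the two refinement maps
   are mutually inverse bijections matching equal summands. *)

From mathcomp Require Import all_boot all_algebra complex.
From mathcomp Require Import Rstruct.
From mathcomp Require Import zify.
Set Implicit Arguments. Unset Strict Implicit. Unset Printing Implicit Defensive.
Import GRing.Theory.
Local Open Scope ring_scope.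

Definition split_at (T : Type) t (V : 'I_t -> T) (i : 'I_t) (x y : T)
    (k : 'I_t.+1) : T :=
  if unlift ord0 k is Some k' then (if k' == i then x else V k') else y.

Section SplitAt.
Variables (T : Type) (t : nat) (V : 'I_t -> T) (i : 'I_t) (x y : T).

Lemma split_at0 : split_at V i x y ord0 = y.
Proof. by rewrite /split_at unlift_none. Qed.

Lemma split_at_lift k : split_at V i x y (lift ord0 k) = if k == i then x else V k.
Proof. by rewrite /split_at liftK. Qed.

Lemma split_atP (P : T -> Prop) :
  P x -> P y -> (forall k, P (V k)) -> forall k, P (split_at V i x y k).
Proof.
move=> Px Py PV k; case: (unliftP ord0 k) => [k' ->|->].
  by rewrite split_at_lift; case: eqP.
by rewrite split_at0.
Qed.

Lemma big_split_at (R : Type) (idx : R) (op : Monoid.com_law idx) (F : T -> R) :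
  \big[op/idx]_k F (split_at V i x y k)
    = op (F y) (op (F x) (\big[op/idx]_(k | k != i) F (V k))).
Proof.
rewrite big_ord_recl split_at0 (bigD1 i) //= split_at_lift eqxx.
by congr (op _ (op _ _)); apply: eq_bigr => k ki; rewrite split_at_lift (negPf ki).
Qed.

End SplitAt.

Section Decompositions.
Variables (K : fieldType) (vT : vectType K).

Lemma directv_sub_eq0 (I : finType) (V : I -> {vspace vT}) i k :
  directv (\sum_j V j) -> k != i -> (V i <= V k)%VS -> V i = 0%VS.
Proof.
move=> /directv_sumP dxV ki sVik; apply/eqP.
by rewrite -subv0 -(dxV i isT) subv_cap subvv; apply: (sumv_sup k).
Qed.

Lemma card_le_dim_directv (I : finType) (V : I -> {vspace vT}) :
  directv (\sum_i V i) -> (forall i, V i != 0%VS) -> (#|I| <= dim vT)%N.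
Proof.
rewrite directvE /= => /eqP dimV nzV.
rewrite -sum1_card -dimvf (leq_trans _ (dimvS (subvf (\sum_i V i)))) // dimV.
by apply: leq_sum => i _; rewrite lt0n dimv_eq0 nzV.
Qed.

Lemma directv_mutual_refinement (I J : finType)
    (V : I -> {vspace vT}) (W : J -> {vspace vT}) :
  directv (\sum_i V i) -> directv (\sum_j W j) ->
  (forall i, V i != 0%VS) -> (forall j, W j != 0%VS) ->
  (forall i, exists j, (V i <= W j)%VS) -> (forall j, exists i, (W j <= V i)%VS) ->
  exists f : I -> J, bijective f /\ forall i, W (f i) = V i.
Proof.
move=> dxV dxW nzV nzW /fin_all_exists[f sVW] /fin_all_exists[g sWV].
have fK : cancel f g.
  move=> i; apply/eqP; apply: contraT => gfi; case/negP: (nzV i); apply/eqP.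
  exact: directv_sub_eq0 dxV gfi (subv_trans (sVW i) (sWV (f i))).
have gK : cancel g f.
  move=> j; apply/eqP; apply: contraT => fgj; case/negP: (nzW j); apply/eqP.
  exact: directv_sub_eq0 dxW fgj (subv_trans (sWV j) (sVW (g j))).
exists f; split; first exact: Bijective fK gK.
by move=> i; apply: subv_anti; rewrite sVW andbT -{2}(fK i) sWV.
Qed.

Lemma sumv_split_at t (V : 'I_t -> {vspace vT}) i X Y :
  (X + Y = V i)%VS -> (\sum_k split_at V i X Y k = \sum_k V k)%VS.
Proof.
move=> defVi; rewrite (big_split_at _ _ _ _ _ id) [RHS](bigD1 i) //= -defVi.
by rewrite addvA [(Y + X)%VS]addvC.
Qed.

Lemma directv_split_at t (V : 'I_t -> {vspace vT}) i X Y :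
  (X + Y = V i)%VS -> (X :&: Y = 0)%VS -> directv (\sum_k V k) ->
  directv (\sum_k split_at V i X Y k).
Proof.
move=> defVi dxXY; rewrite !directvE /= sumv_split_at //.
rewrite big_split_at [X in _ == X](bigD1 i) //= -defVi dimv_disjoint_sum //.
by rewrite addnCA addnA.
Qed.

Section Subspans.
Variables (I : finType) (a : I -> vT).

Definition subspan (P : pred I) : {vspace vT} := (\sum_(i | P i) <[a i]>)%VS.

Definition spanned (U : {vspace vT}) := (U <= subspan [pred i | a i \in U])%VS.

Definition cut_span (U : {vspace vT}) (Q : {set I}) :=
  subspan [pred i | (a i \in U) && (i \in Q)].
Definition proper_cut (U : {vspace vT}) (Q : {set I}) :=
  [&& cut_span U Q != 0%VS, cut_span U (~: Q) != 0%VS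
    & cut_span U Q :&: cut_span U (~: Q) == 0]%VS.

Lemma mem_subspan (P : pred I) i : P i -> a i \in subspan P.
Proof. by move=> Pi; rewrite memvE; apply: (sumv_sup i). Qed.

Lemma subspan_sub (P : pred I) (U : {vspace vT}) :
  (forall i, P i -> a i \in U) -> (subspan P <= U)%VS.
Proof. by move=> PU; apply/subv_sumP => i /PU; rewrite -memvE. Qed.

Lemma spanned_subspan (P : pred I) : spanned (subspan P).
Proof. by apply: subspan_sub => i Pi; apply: mem_subspan; apply: mem_subspan. Qed.

Lemma cut_spanE (U : {vspace vT}) (Q : {set I}) :
  spanned U -> (cut_span U Q + cut_span U (~: Q) = U)%VS.
Proof.
move=> spU; apply: subv_anti; rewrite subv_add !subspan_sub; last 2 first.
- by move=> i /andP[].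
- by move=> i /andP[].
apply: subv_trans spU _; rewrite /subspan (bigID (mem Q)) /=.
by apply: addvS; apply: subspan_sub => i /andP[Ui Qi];
  apply: mem_subspan; rewrite /= Ui ?inE.
Qed.

Lemma spanned_neq0 (U : {vspace vT}) :
  spanned U -> U != 0%VS -> exists2 i, a i \in U & a i != 0.
Proof.
move=> spU nzU.
have [/existsP[i /andP[Ui nzi]]|/existsPn none] :=
  boolP [exists i, (a i \in U) && (a i != 0)]; first by exists i.
case/negP: nzU; rewrite -subv0; apply: subv_trans spU (subspan_sub _) => i /= Ui.
by have := none i; rewrite Ui memv0 negbK.
Qed.

Lemma cut_summand_disjoint (J : finType) (W : J -> {vspace vT}) U j0 :
  directv (\sum_j W j) -> (forall i, exists j, a i \in W j) ->
  let Q := [set i | a i \in W j0] in (cut_span U Q :&: cut_span U (~: Q) = 0)%VS.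
Proof.
move=> /directv_sumP dxW adW /=; apply/eqP.
rewrite -subv0 -(dxW j0 isT) capvS ?subspan_sub // => i /andP[_]; rewrite !inE //.
move=> Wi; have [j Wj] := adW i; rewrite memvE; apply: (sumv_sup j).
  by apply: contraNneq Wi => <-.
by rewrite -memvE.
Qed.

End Subspans.
End Decompositions.

Section ColumnDecompositions.
Variables (c r : nat) (A : 'M[Cplx]_(c.+1, r.+1)).
Local Notation cols := (fun i : 'I_r.+1 => col i A).

Definition col_spanned_decomp t (V : 'I_t -> {vspace Cvec c}) :=
  [/\ is_direct_decomp V, forall j, V j != 0%VS, cols_adapted A V
    & forall j, spanned cols (V j)].

Lemma cols_span_full : \rank A = c.+1 -> subspan cols predT = fullv.
Proof.
move=> rkA; apply/eqP; rewrite eqEsubv subvf; apply/subvP => v _.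
have /row_freeP[B AB] : row_free A by rewrite /row_free rkA.
have -> : v = \sum_i (B *m v) i 0 *: col i A.
  apply: trmx_inj; rewrite -[v in LHS]mul1mx -AB -mulmxA trmx_mul mulmx_sum_row.
  by rewrite linear_sum; apply: eq_bigr => i _; rewrite linearZ /= tr_col mxE.
by apply: rpred_sum => i _; apply/rpredZ/mem_subspan.
Qed.

Lemma col_spanned_decomp_full :
  \rank A = c.+1 -> col_spanned_decomp (fun _ : 'I_1 => fullv).
Proof.
move=> rkA; split.
- by split; rewrite ?directvE /= !big_ord1.
- by move=> _; rewrite -dimv_eq0 dimvf.
- by move=> i; exists ord0; rewrite memvf.
- move=> _; rewrite /spanned -{1}(cols_span_full rkA).
  by apply: subspan_sub => i _; apply/mem_subspan/memvf.
Qed.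

Lemma col_spanned_decomp_split t (V : 'I_t -> {vspace Cvec c}) i Q :
  col_spanned_decomp V -> proper_cut cols (V i) Q ->
  col_spanned_decomp
    (split_at V i (cut_span cols (V i) Q) (cut_span cols (V i) (~: Q))).
Proof.
case=> [[dxV sumV] nzV adV spV] /and3P[nzX nzY /eqP dxXY].
have defVi := cut_spanE Q (spV i).
split.
- by split; [apply: directv_split_at | rewrite sumv_split_at].
- exact: (split_atP _ (P := fun U => U != 0%VS)).
- move=> k; have [j] := adV k; have [-> Vik|ji Vjk] := eqVneq j i; last first.
    by exists (lift ord0 j); rewrite split_at_lift (negPf ji).
  have [Qk|Qk] := boolP (k \in Q).
    exists (lift ord0 i); rewrite split_at_lift eqxx.
    by apply: mem_subspan; rewrite /= Vik.
  by exists ord0; rewrite split_at0; apply: mem_subspan; rewrite /= Vik inE.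
- by apply: (split_atP _ (P := spanned cols)) => //; apply: spanned_subspan.
Qed.

Lemma col_spanned_decomp_finest t (V : 'I_t -> {vspace Cvec c}) :
  col_spanned_decomp V -> (forall i Q, ~~ proper_cut cols (V i) Q) ->
  finest_adapted_decomp A V.
Proof.
case=> dV nzV adV spV noCut; split=> // s W [dxW _] adW i.
have [/existsP//|/existsPn notSub] := boolP [exists j, (V i <= W j)%VS].
have [k Vik nzk] := spanned_neq0 (spV i) (nzV i).
have [j0 Wk] := adW k.
set Q := [set m | col m A \in W j0].
have sXW : (cut_span cols (V i) Q <= W j0)%VS.
  by apply: subspan_sub => m /andP[_]; rewrite inE.
case/and3P: (noCut i Q); split.
- apply: contraNneq nzk => X0; rewrite -memv0 -X0.
  by apply: mem_subspan; rewrite /= Vik inE.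
- apply: contraNneq (notSub j0) => Y0.
  by rewrite -(cut_spanE Q (spV i)) Y0 addv0.
- by apply/eqP; apply: cut_summand_disjoint.
Qed.

(* Being finest quantifies over all decompositions; it is decided here by the
   finitely many cuts of the summands along sets of columns. *)
Lemma col_spanned_decomp_finest_or_split t (V : 'I_t -> {vspace Cvec c}) :
  col_spanned_decomp V ->
  finest_adapted_decomp A V \/
  exists U : 'I_t.+1 -> {vspace Cvec c}, col_spanned_decomp U.
Proof.
move=> dV; have [/existsP[i /existsP[Q cutQ]]|/existsPn noCut] :=
  boolP [exists i, [exists Q, proper_cut cols (V i) Q]].
  by right; eexists; apply: col_spanned_decomp_split dV cutQ.
by left; apply: col_spanned_decomp_finest => // i; apply/existsPn/noCut.
Qed.

Lemma col_spanned_decomp_size t (V : 'I_t -> {vspace Cvec c}) :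
  col_spanned_decomp V -> (t <= c.+1)%N.
Proof.
case=> [[dxV _] nzV _ _].
by have := card_le_dim_directv dxV nzV; rewrite card_ord dim_matrix mulr1.
Qed.

Lemma exists_finest_adapted_decomp :
  \rank A = c.+1 -> exists t (V : 'I_t -> {vspace Cvec c}), finest_adapted_decomp A V.
Proof.
move=> rkA.
suff /(_ c.+1 1%N _ (col_spanned_decomp_full rkA)) :
    forall n t (V : 'I_t -> {vspace Cvec c}),
    col_spanned_decomp V -> (c.+1 - t <= n)%N ->
    exists t (V : 'I_t -> {vspace Cvec c}), finest_adapted_decomp A V.
  by apply; rewrite leq_subr.
elim=> [|n IHn] t V dV le_n.
all: case: (col_spanned_decomp_finest_or_split dV) => [|[U dU]]; first by exists t, V.
- by have := col_spanned_decomp_size dU; lia.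
- by apply: IHn U dU _; lia.
Qed.

End ColumnDecompositions.

Theorem lemma3p5 (c r : nat) (A : 'M[Cplx]_(c.+1, r.+1)) :
  \rank A = c.+1 ->
  (forall i j : 'I_r.+1, i != j -> free [:: col i A; col j A]) ->
  (exists (t : nat) (V : 'I_t -> {vspace 'cV[Cplx]_(c.+1)}),
      finest_adapted_decomp A V) /\
  (forall (t t' : nat) (V : 'I_t -> {vspace 'cV[Cplx]_(c.+1)})
          (W : 'I_t' -> {vspace 'cV[Cplx]_(c.+1)}),
      finest_adapted_decomp A V -> finest_adapted_decomp A W ->
      exists f : 'I_t -> 'I_t', bijective f /\ forall i, W (f i) = V i).
Proof.
move=> rkA _; split; first exact: exists_finest_adapted_decomp.
move=> t t' V W [dV nzV adV finV] [dW nzW adW finW].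
exact: directv_mutual_refinement (proj1 dV) (proj1 dW) nzV nzW
  (finV _ _ dW adW) (finW _ _ dV adV).
Qed.
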